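(* Let $H$ be a weak Hopf algebra with bijective antipode $S$, and in ${H_{par}^w}$ put $E_h=[h_1][S(h_2)]$ and $\tilde E_h=[S(h_1)][h_2]$. Then for all $h,k\in H$: (a) $E_k[h]=[h_2]E_{S^{-1}(h_1)k}$; (b) $[h]\tilde E_k=\tilde E_{kS^{-1}(h_2)}[h_1]$; (c) $E_k[h]=\tilde E_{S^{-1}(h_2)}E_k[h_1]$; (d) $[h]\tilde E_k=[h_2]\tilde E_kE_{S^{-1}(h_1)}$.
   Context: All algebras are associative and unital over a field $\Bbbk$; Sweedler notation $\Delta(h)=h_1\otimes h_2$. A weak Hopf algebra is $(H,m,u,\Delta,\varepsilon,S)$ with $H$ an algebra, $(H,\Delta,\varepsilon)$ a coalgebra, and for all $g,h,k$: $\Delta(kh)=\Delta(k)\Delta(h)$; $\varepsilon(kh_1)\varepsilon(h_2g)=\varepsilon(khg)=\varepsilon(kh_2)\varepsilon(h_1g)$; $(1\otimes\Delta(1))(\Delta(1)\otimes1)=\Delta^2(1)=(\Delta(1)\otimes1)(1\otimes\Delta(1))$; $h_1S(h_2)=\varepsilon(1_1h)1_2$; $S(h_1)h_2=1_1\varepsilon(h1_2)$; $S(h)=S(h_1)h_2S(h_3)$, where $\Delta(1)=1_1\otimes1_2$. ${H_{par}^w}=T(H)/I$, where $T(H)$ is the tensor algebra of the vector space $H$ and $I$ is the ideal generated by, for all $h,k\in H$: $1_H-1_{T(H)}$; $h\otimes k_1\otimes S(k_2)-hk_1\otimes S(k_2)$; $h\otimes S(k_1)\otimes k_2-hS(k_1)\otimes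 k_2$; $h_1\otimes S(h_2)\otimes k-h_1\otimes S(h_2)k$; $S(h_1)\otimes h_2\otimes k-S(h_1)\otimes h_2k$; $h-h_1\otimes S(h_2)\otimes h_3$; $[h]$ denotes the class of $h$. *)

From HB Require Import structures.
From mathcomp Require Import all_boot all_algebra.
Set Implicit Arguments. Unset Strict Implicit. Unset Printing Implicit Defensive.
Import GRing.Theory.
Local Open Scope ring_scope.

(* Tensors.  An element of H (x) H (resp. H (x) H (x) H) is represented by a  *)
(* finite formal sum of simple tensors, i.e. a list of pairs (triples).       *)
(* Two such lists denote the same tensor iff they agree under every bilinear *)
(* (trilinear) map into every K-vector space: this is exactly the universal  *)
(* property of the tensor product.  The coproduct is then a function          *)
(* D : H -> seq (H * H) choosing a Sweedler representation                    *)
(*   Delta(h) = \sum_(p <- D h) p.1 (x) p.2 ,                                 *)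
(* and every Sweedler expression below is (multi)linear in the legs, hence   *)
(* independent of the chosen representation.                                  *)

Section Tensors.
Variables (K : fieldType) (H : lmodType K).

Definition linmap (V : lmodType K) (f : H -> V) :=
  forall (c : K) (x y : H), f (c *: x + y) = c *: f x + f y.

Definition bilin (V : lmodType K) (f : H -> H -> V) :=
  (forall b, linmap (fun a => f a b)) /\ (forall a, linmap (f a)).

Definition trilin (V : lmodType K) (f : H -> H -> H -> V) :=
  [/\ forall b c, linmap (fun a => f a b c),
      forall a c, linmap (fun b => f a b c) &
      forall a b, linmap (f a b)].

Definition tens2_eq (t u : seq (H * H)) : Prop :=
  forall (V : lmodType K) (f : H -> H -> V), bilin f ->
    \sum_(p <- t) f p.1 p.2 = \sum_(p <- u) f p.1 p.2.

Definition tens3_eq (t u : seq (H * H * H)) : Prop :=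
  forall (V : lmodType K) (f : H -> H -> H -> V), trilin f ->
    \sum_(p <- t) f p.1.1 p.1.2 p.2 = \sum_(p <- u) f p.1.1 p.1.2 p.2.

Definition tens2_scale (c : K) (t : seq (H * H)) : seq (H * H) :=
  [seq (c *: p.1, p.2) | p <- t].

End Tensors.

Section WeakHopf.
Variables (K : fieldType) (H : algType K).
Variables (D : H -> seq (H * H)) (eps : H -> K) (S : H -> H).

Record is_weak_hopf : Prop := {
  comul_linear : forall (c : K) (x y : H),
      tens2_eq (D (c *: x + y)) (tens2_scale c (D x) ++ D y);
  counit_linear : forall (c : K) (x y : H), eps (c *: x + y) = c * eps x + eps y;
  coassoc : forall h : H,
      tens3_eq [seq (q.1, q.2, p.2) | p <- D h, q <- D p.1]
               [seq (p.1, q.1, q.2) | p <- D h, q <- D p.2];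
  counitL : forall h : H, \sum_(p <- D h) eps p.1 *: p.2 = h;
  counitR : forall h : H, \sum_(p <- D h) eps p.2 *: p.1 = h;
  antipode_linear : forall (c : K) (x y : H), S (c *: x + y) = c *: S x + S y;
  comul_mul : forall k h : H,
      tens2_eq (D (k * h)) [seq (p.1 * q.1, p.2 * q.2) | p <- D k, q <- D h];
  counit_weak1 : forall k h g : H,
      \sum_(p <- D h) eps (k * p.1) * eps (p.2 * g) = eps (k * h * g);
  counit_weak2 : forall k h g : H,
      eps (k * h * g) = \sum_(p <- D h) eps (k * p.2) * eps (p.1 * g);
  (* (1 (x) Delta(1))(Delta(1) (x) 1) = Delta^2(1) = (Delta(1) (x) 1)(1 (x) Delta(1)) *)
  comul_unit1 :
      tens3_eq [seq (q.1, p.1 * q.2, p.2) | p <- D 1, q <- D 1]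
               [seq (q.1, q.2, p.2) | p <- D 1, q <- D p.1];
  comul_unit2 :
      tens3_eq [seq (q.1, q.2, p.2) | p <- D 1, q <- D p.1]
               [seq (p.1, p.2 * q.1, q.2) | p <- D 1, q <- D 1];
  antipode_target : forall h : H,
      \sum_(p <- D h) p.1 * S p.2 = \sum_(q <- D 1) eps (q.1 * h) *: q.2;
  antipode_source : forall h : H,
      \sum_(p <- D h) S p.1 * p.2 = \sum_(q <- D 1) eps (h * q.2) *: q.1;
  antipode_SHS : forall h : H,
      S h = \sum_(p <- D h) \sum_(q <- D p.2) S p.1 * q.1 * S q.2
}.

(* The algebra H_par^w = T(H)/I, given by its universal property:            *)
(* an algebra A together with the map [_] : H -> A (the class of h), which   *)
(* is linear (T(H) is the tensor algebra of the vector space H), satisfies    *)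
(* the defining relations of I, and is universal among such maps.            *)

Definition wpar_relations (A : algType K) (pi : H -> A) : Prop :=
  [/\ forall (c : K) (x y : H), pi (c *: x + y) = c *: pi x + pi y,
      pi 1 = 1,
      forall h k : H, \sum_(p <- D k) pi h * pi p.1 * pi (S p.2)
                      = \sum_(p <- D k) pi (h * p.1) * pi (S p.2),
      forall h k : H, \sum_(p <- D k) pi h * pi (S p.1) * pi p.2
                      = \sum_(p <- D k) pi (h * S p.1) * pi p.2 &
      [/\
      forall h k : H, \sum_(p <- D h) pi p.1 * pi (S p.2) * pi k
                      = \sum_(p <- D h) pi p.1 * pi (S p.2 * k),
      forall h k : H, \sum_(p <- D h) pi (S p.1) * pi p.2 * pi k
                      = \sum_(p <- D h) pi (S p.1) * pi (p.2 * k) &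
      forall h : H, pi h = \sum_(p <- D h) \sum_(q <- D p.2)
                             pi p.1 * pi (S q.1) * pi q.2]].

Definition alg_hom (A B : algType K) (f : A -> B) : Prop :=
  [/\ forall (c : K) (x y : A), f (c *: x + y) = c *: f x + f y,
      forall x y : A, f (x * y) = f x * f y &
      f 1 = 1].

Definition is_Hparw (A : algType K) (pi : H -> A) : Prop :=
  wpar_relations pi /\
  forall (B : algType K) (rho : H -> B), wpar_relations rho ->
    exists f : A -> B,
      [/\ alg_hom f, forall h, f (pi h) = rho h &
          forall g : A -> B, alg_hom g -> (forall h, g (pi h) = rho h) ->
            forall x, g x = f x].

Definition Eop (A : algType K) (pi : H -> A) (h : H) : A :=
  \sum_(p <- D h) pi p.1 * pi (S p.2).

Definition Etop (A : algType K) (pi : H -> A) (h : H) : A :=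
  \sum_(p <- D h) pi (S p.1) * pi p.2.

End WeakHopf.

From HB Require Import structures.
From mathcomp Require Import all_boot all_algebra.
Set Implicit Arguments. Unset Strict Implicit. Unset Printing Implicit Defensive.
Import GRing.Theory.
Local Open Scope ring_scope.

(* For (a), merging [h_2] into E_(S^-1(h_1) k) and using
   Delta(S^-1 x) = S^-1(x_2) (x) S^-1(x_1) turn the right-hand side into
   [S^-1(eps_t(h_2)) k_1][S(k_2) h_1].  Then h_1 (x) eps_t(h_2) = 1_1 h (x) 1_2
   and 1_1 (x) 1_2 = S(1_2) (x) S(1_1) collapse it to [k_1][S(k_2) h] = E_k[h].
   Part (b) is the mirror image, with eps_s in place of eps_t.  As E_1 and ~E_1
   are 1, (a) and (b) at k = 1 give [h] = [h_2] E_(S^-1(h_1)) and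
   [h] = ~E_(S^-1(h_2)) [h_1]; substituting these and applying (a), (b) once more
   yields (c) and (d) by coassociativity.  The weak Hopf algebra facts involved
   (S is anti-multiplicative, Delta o S = (S (x) S) o Delta^op, the identities for
   1_1 (x) 1_2 above) are derived from the axioms, following
   Boehm-Nill-Szlachanyi. *)

Section Linearity.
Variable K : fieldType.
Implicit Types (U V W : lmodType K) (A : algType K).

Definition linear_form U (g : U -> K) :=
  forall (c : K) (x y : U), g (c *: x + y) = c * g x + g y.

Lemma linmapD U V (f : U -> V) : linmap f -> forall x y, f (x + y) = f x + f y.
Proof. by move=> L x y; have := L 1 x y; rewrite !scale1r. Qed.

Lemma linmap0 U V (f : U -> V) : linmap f -> f 0 = 0.
Proof. by move=> L; apply: (@addIr _ (f 0)); rewrite add0r -(linmapD L) addr0. Qed.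

Lemma linmapZ U V (f : U -> V) : linmap f -> forall c x, f (c *: x) = c *: f x.
Proof. by move=> L c x; have := L c x 0; rewrite !addr0 (linmap0 L) addr0. Qed.

Lemma linmap_sum U V (f : U -> V) : linmap f ->
  forall (I : Type) (s : seq I) (F : I -> U),
  f (\sum_(i <- s) F i) = \sum_(i <- s) f (F i).
Proof. by move=> L I s F; apply: (big_morph f (linmapD L) (linmap0 L)). Qed.

Lemma linear_formD U (g : U -> K) : linear_form g -> forall x y, g (x + y) = g x + g y.
Proof. by move=> L x y; have := L 1 x y; rewrite scale1r mul1r. Qed.

Lemma linear_form0 U (g : U -> K) : linear_form g -> g 0 = 0.
Proof. by move=> L; apply: (@addIr _ (g 0)); rewrite add0r -(linear_formD L) addr0. Qed.

Lemma linear_formZ U (g : U -> K) : linear_form g -> forall c x, g (c *: x) = c * g x.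
Proof. by move=> L c x; have := L c x 0; rewrite !addr0 (linear_form0 L) addr0. Qed.

Lemma linear_form_sum U (g : U -> K) : linear_form g ->
  forall (I : Type) (s : seq I) (F : I -> U),
  g (\sum_(i <- s) F i) = \sum_(i <- s) g (F i).
Proof. by move=> L I s F; apply: (big_morph g (linear_formD L) (linear_form0 L)). Qed.

Lemma linmap_sum_fun U V (I : Type) (s : seq I) (F : I -> U -> V) :
  (forall i, linmap (F i)) -> linmap (fun x => \sum_(i <- s) F i x).
Proof.
move=> L c x y; rewrite scaler_sumr -big_split /=.
by apply: eq_bigr => i _; apply: L.
Qed.

Lemma linmap_scaler U V (f : U -> V) (c : K) :
  linmap f -> linmap (fun x => c *: f x).
Proof. by move=> L d x y; rewrite L scalerDr !scalerA mulrC. Qed.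

Lemma linmap_scalel U V (g : U -> K) (v : V) :
  linear_form g -> linmap (fun x => g x *: v).
Proof. by move=> L c x y; rewrite L scalerDl scalerA. Qed.

Lemma linmap_mull U A (a : A) (f : U -> A) :
  linmap f -> linmap (fun x => a * f x).
Proof. by move=> L c x y; rewrite L mulrDr scalerAr. Qed.

Lemma linmap_mulr U A (a : A) (f : U -> A) :
  linmap f -> linmap (fun x => f x * a).
Proof. by move=> L c x y; rewrite L mulrDl scalerAl. Qed.

Lemma linmap_comp U V W (g : V -> W) (f : U -> V) :
  linmap g -> linmap f -> linmap (fun x => g (f x)).
Proof. by move=> Lg Lf c x y; rewrite Lf Lg. Qed.

Lemma linear_form_comp U V (g : V -> K) (f : U -> V) :
  linear_form g -> linmap f -> linear_form (fun x => g (f x)).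
Proof. by move=> Lg Lf c x y; rewrite Lf Lg. Qed.

Lemma linear_form_mull U (k : K) (g : U -> K) :
  linear_form g -> linear_form (fun x => k * g x).
Proof. by move=> L c x y; rewrite L mulrDr mulrCA. Qed.

Lemma linear_form_mulr U (k : K) (g : U -> K) :
  linear_form g -> linear_form (fun x => g x * k).
Proof. by move=> L c x y; rewrite L mulrDl mulrA. Qed.

Section Multilinear.
Variables (H : lmodType K) (V : lmodType K) (f : H -> H).
Hypothesis Lf : linmap f.

Lemma linmap_bilinl (F : H -> H -> V) b : bilin F -> linmap (fun x => F (f x) b).
Proof. by case=> L _; exact: linmap_comp (L b) Lf. Qed.

Lemma linmap_bilinr (F : H -> H -> V) a : bilin F -> linmap (fun x => F a (f x)).
Proof. by case=> _ L; exact: linmap_comp (L a) Lf. Qed.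

End Multilinear.

End Linearity.

Section WeakHopf.
Variables (K : fieldType) (H : algType K).
Variables (D : H -> seq (H * H)) (eps : H -> K) (S : H -> H).
Hypothesis W : is_weak_hopf D eps S.
Implicit Types (V : lmodType K) (A : algType K) (h g x y : H).

Definition sweedler V (F : H -> H -> V) (h : H) : V := \sum_(p <- D h) F p.1 p.2.

Lemma S_linmap : linmap S.
Proof. exact: antipode_linear W. Qed.

Lemma eps_linear : linear_form eps.
Proof. exact: counit_linear W. Qed.

Lemma linmap_S (f : H -> H) : linmap f -> linmap (fun x => S (f x)).
Proof. exact: linmap_comp S_linmap. Qed.

Lemma linear_form_eps (f : H -> H) : linmap f -> linear_form (fun x => eps (f x)).
Proof. exact: linear_form_comp eps_linear. Qed.

Lemma linmap_sweedler V (F : H -> H -> V) : bilin F -> linmap (sweedler F).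
Proof.
move=> BF c x y; rewrite /sweedler (comul_linear W c x y BF) big_cat /= big_map.
rewrite scaler_sumr; congr (_ + _); apply: eq_bigr => p _ /=.
by case: BF => /(_ p.2) /linmapZ ->.
Qed.

Lemma linmap_sweedler_comp V (F : H -> H -> V) (f : H -> H) :
  bilin F -> linmap f -> linmap (fun x => sweedler F (f x)).
Proof. by move=> BF; apply: linmap_comp; apply: linmap_sweedler. Qed.

Lemma linmap_sweedler_fun V (F : H -> H -> H -> V) y :
  (forall a b, linmap (fun x => F x a b)) -> linmap (fun x => sweedler (F x) y).
Proof. by move=> L; apply: linmap_sum_fun => p; apply: L. Qed.

Ltac linear_step := first
  [ apply: linmap_scaler
  | apply: linmap_scalel
  | apply: linmap_mull
  | apply: linmap_mulr
  | apply: linear_form_mull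
  | apply: linear_form_mulr
  | apply: linear_form_eps
  | apply: linmap_S
  | apply: linmap_sweedler_comp; [split=> ? /=|]
  | apply: linmap_sweedler_fun => ? ? /=
  | apply: linmap_bilinl; [|eassumption]
  | apply: linmap_bilinr; [|eassumption] ].
Ltac bilinear := split=> ? /=; repeat linear_step.
Ltac trilinear := split=> ? ? /=; repeat linear_step.

Lemma eq_sweedler V (F G : H -> H -> V) x :
  (forall a b, F a b = G a b) -> sweedler F x = sweedler G x.
Proof. by move=> E; apply: eq_bigr => p _; apply: E. Qed.

Lemma exchange_sweedler V (F : H -> H -> H -> H -> V) x y :
  sweedler (fun a b => sweedler (F a b) y) x
  = sweedler (fun c d => sweedler (fun a b => F a b c d) x) y.
Proof. exact: exchange_big. Qed.

Lemma linmap_sweedlerE V V' (g : V -> V') (F : H -> H -> V) x :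
  linmap g -> g (sweedler F x) = sweedler (fun a b => g (F a b)) x.
Proof. by move=> L; rewrite /sweedler (linmap_sum L). Qed.

Lemma mulr_sweedlerl A (F : H -> H -> A) x v :
  sweedler F x * v = sweedler (fun a b => F a b * v) x.
Proof. exact: mulr_suml. Qed.

Lemma mulr_sweedlerr A (F : H -> H -> A) x v :
  v * sweedler F x = sweedler (fun a b => v * F a b) x.
Proof. exact: mulr_sumr. Qed.

Lemma scaler_sweedler V (F : H -> H -> V) x c :
  c *: sweedler F x = sweedler (fun a b => c *: F a b) x.
Proof. exact: scaler_sumr. Qed.

Lemma coassoc_sweedler V (F : H -> H -> H -> V) h : trilin F ->
  sweedler (fun a b => sweedler (fun c d => F c d b) a) h
  = sweedler (fun a b => sweedler (fun c d => F a c d) b) h.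
Proof. by move=> TF; have := coassoc W h TF; rewrite !big_allpairs_dep. Qed.

Lemma comul_mul_sweedler V (F : H -> H -> V) k h : bilin F ->
  sweedler F (k * h)
  = sweedler (fun a b => sweedler (fun c d => F (a * c) (b * d)) h) k.
Proof. by move=> BF; have := comul_mul W k h BF; rewrite !big_allpairs_dep. Qed.

Lemma comul1_sweedlerl V (F : H -> H -> H -> V) : trilin F ->
  sweedler (fun a b => sweedler (fun c d => F c (a * d) b) 1) 1
  = sweedler (fun a b => sweedler (fun c d => F c d b) a) 1.
Proof. by move=> TF; have := comul_unit1 W TF; rewrite !big_allpairs_dep. Qed.

Lemma comul1_sweedlerr V (F : H -> H -> H -> V) : trilin F ->
  sweedler (fun a b => sweedler (fun c d => F c d b) a) 1
  = sweedler (fun a b => sweedler (fun c d => F a (b * c) d) 1) 1.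
Proof. by move=> TF; have := comul_unit2 W TF; rewrite !big_allpairs_dep. Qed.

Lemma counitl_sweedler V (g : H -> V) h : linmap g ->
  sweedler (fun a b => eps a *: g b) h = g h.
Proof.
move=> L; rewrite -{2}(counitL W h) (linmap_sum L).
by apply: eq_bigr => p _; rewrite (linmapZ L).
Qed.

Lemma counitr_sweedler V (g : H -> V) h : linmap g ->
  sweedler (fun a b => eps b *: g a) h = g h.
Proof.
move=> L; rewrite -{2}(counitR W h) (linmap_sum L).
by apply: eq_bigr => p _; rewrite (linmapZ L).
Qed.

Lemma antipode_sweedler3 h :
  S h = sweedler (fun a b => sweedler (fun c d => S a * c * S d) b) h.
Proof. exact: antipode_SHS W h. Qed.

Definition eps_t y : H := sweedler (fun a b => eps (a * y) *: b) 1.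
Definition eps_s y : H := sweedler (fun a b => eps (y * b) *: a) 1.

Lemma sweedler_mulS y : sweedler (fun a b => a * S b) y = eps_t y.
Proof. exact: antipode_target W y. Qed.

Lemma sweedler_Smul y : sweedler (fun a b => S a * b) y = eps_s y.
Proof. exact: antipode_source W y. Qed.

Lemma eps_s_linmap : linmap eps_s.
Proof. by rewrite /eps_s; repeat linear_step. Qed.

Lemma comul_eps_t V (F : H -> H -> V) x : bilin F ->
  sweedler (fun a b => F a (eps_t b)) x = sweedler (fun a b => F (a * x) b) 1.
Proof.
move=> BF; have [_ BF2] := BF.
pose T u v w := sweedler (fun x1 x2 => eps (v * x2) *: F (u * x1) w) x.
have TT : trilin T by rewrite /T; trilinear.
transitivity (sweedler (fun p1 p2 => sweedler (fun q1 q2 => T p1 (q1 * p2) q2) 1) 1).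
  rewrite -{1}[x]mul1r comul_mul_sweedler; last by rewrite /eps_t; bilinear.
  apply: eq_sweedler => p1 p2; rewrite /T exchange_sweedler.
  apply: eq_sweedler => x1 x2; rewrite /eps_t (linmap_sweedlerE _ _ (BF2 _)).
  by apply: eq_sweedler => q1 q2; rewrite (linmapZ (BF2 _)) mulrA.
rewrite exchange_sweedler comul1_sweedlerl //.
apply: eq_sweedler => a b; rewrite -(counitr_sweedler (g := F^~ b)); last by case: BF.
by rewrite comul_mul_sweedler //; bilinear.
Qed.

Lemma comul_eps_s V (F : H -> H -> V) x : bilin F ->
  sweedler (fun a b => F (eps_s a) b) x = sweedler (fun a b => F a (x * b)) 1.
Proof.
move=> BF; have [BF1 _] := BF.
pose T u v w := sweedler (fun x1 x2 => eps (x1 * v) *: F u (x2 * w)) x.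
have TT : trilin T by rewrite /T; trilinear.
transitivity (sweedler (fun p1 p2 => sweedler (fun q1 q2 => T q1 (p1 * q2) p2) 1) 1).
  rewrite -{1}[x]mulr1 comul_mul_sweedler; last by rewrite /eps_s; bilinear.
  rewrite exchange_sweedler; apply: eq_sweedler => p1 p2.
  rewrite /T exchange_sweedler; apply: eq_sweedler => x1 x2.
  rewrite /eps_s (linmap_sweedlerE _ _ (BF1 _)); apply: eq_sweedler => q1 q2.
  by rewrite (linmapZ (BF1 _)) mulrA.
rewrite comul1_sweedlerl // coassoc_sweedler //; apply: eq_sweedler => a b.
rewrite -(counitl_sweedler (g := F a)); last by case: BF.
rewrite comul_mul_sweedler; last by bilinear.
by rewrite /T exchange_sweedler.
Qed.

Lemma counit_mul_eps_t h g : eps (h * eps_t g) = eps (h * g).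
Proof.
rewrite /eps_t /sweedler mulr_sumr (linear_form_sum eps_linear).
have := counit_weak2 W h 1 g; rewrite mulr1 => ->.
by apply: eq_bigr => p _; rewrite -scalerAr (linear_formZ eps_linear) mulrC.
Qed.

Lemma counit_eps_s_mul h g : eps (eps_s h * g) = eps (h * g).
Proof.
rewrite /eps_s /sweedler mulr_suml (linear_form_sum eps_linear).
have := counit_weak2 W h 1 g; rewrite mulr1 => ->.
by apply: eq_bigr => p _; rewrite -scalerAl (linear_formZ eps_linear).
Qed.

Lemma eps_tM h g : sweedler (fun a b => a * eps_t g * S b) h = eps_t (h * g).
Proof.
transitivity (sweedler (fun a b => sweedler (fun c d => eps (c * g) *: (a * d * S b)) 1) h).
  apply: eq_sweedler => a b; rewrite /eps_t mulr_sweedlerr mulr_sweedlerl.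
  by apply: eq_sweedler => c d; rewrite -scalerAr -scalerAl.
transitivity (sweedler (fun a b => sweedler (fun c d => eps (eps_s c * g) *: (d * S b)) a) h).
  apply: eq_sweedler => a b.
  by rewrite (comul_eps_s (F := fun u v => eps (u * g) *: (v * S b))) //; bilinear.
transitivity (sweedler (fun a b => sweedler (fun c d => eps (a * g) *: (c * S d)) b) h).
  rewrite -coassoc_sweedler; last by trilinear.
  by apply: eq_sweedler => a b; apply: eq_sweedler => c d; rewrite counit_eps_s_mul.
transitivity (sweedler (fun a b => eps (a * g) *: eps_t b) h).
  by apply: eq_sweedler => a b; rewrite -scaler_sweedler sweedler_mulS.
rewrite (comul_eps_t (F := fun u v => eps (u * g) *: v)); last by bilinear.
by apply: eq_sweedler => a b; rewrite mulrA.
Qed.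

Lemma eps_sM h g : sweedler (fun a b => S a * eps_s h * b) g = eps_s (h * g).
Proof.
transitivity (sweedler (fun a b => sweedler (fun c d => eps (h * d) *: (S a * (c * b))) 1) g).
  apply: eq_sweedler => a b; rewrite /eps_s mulr_sweedlerr mulr_sweedlerl.
  by apply: eq_sweedler => c d; rewrite -scalerAr -scalerAl mulrA.
transitivity (sweedler (fun a b => sweedler (fun c d => eps (h * eps_t d) *: (S a * c)) b) g).
  apply: eq_sweedler => a b.
  by rewrite (comul_eps_t (F := fun u v => eps (h * v) *: (S a * u))) //; bilinear.
transitivity (sweedler (fun a b => sweedler (fun c d => eps (h * b) *: (S c * d)) a) g).
  rewrite coassoc_sweedler; last by trilinear.
  by apply: eq_sweedler => a b; apply: eq_sweedler => c d; rewrite counit_mul_eps_t.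
transitivity (sweedler (fun a b => eps (h * b) *: eps_s a) g).
  by apply: eq_sweedler => a b; rewrite -scaler_sweedler sweedler_Smul.
rewrite (comul_eps_s (F := fun u v => eps (h * v) *: u)); last by bilinear.
by apply: eq_sweedler => a b; rewrite mulrA.
Qed.

Lemma eps_s_eps_t_comm x y : eps_s x * eps_t y = eps_t y * eps_s x.
Proof.
pose T (u v w : H) : H := (eps (x * w) * eps (u * y)) *: v.
have TT : trilin T by rewrite /T; trilinear.
transitivity (sweedler (fun a b => sweedler (fun c d => T c (a * d) b) 1) 1).
  rewrite /eps_s /eps_t mulr_sweedlerl; apply: eq_sweedler => a b.
  rewrite mulr_sweedlerr; apply: eq_sweedler => c d.
  by rewrite /T -scalerAl -scalerAr scalerA mulrC.
rewrite comul1_sweedlerl // comul1_sweedlerr //.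
rewrite /eps_s /eps_t mulr_sweedlerl; apply: eq_sweedler => a b.
rewrite mulr_sweedlerr; apply: eq_sweedler => c d.
by rewrite /T -scalerAl -scalerAr scalerA mulrC.
Qed.

Lemma antipode_mul_eps_t y : S y = sweedler (fun a b => S a * eps_t b) y.
Proof.
rewrite antipode_sweedler3; apply: eq_sweedler => a b.
by rewrite -sweedler_mulS mulr_sweedlerr; apply: eq_sweedler => c d; rewrite mulrA.
Qed.

Lemma antipode_eps_s_mul y : S y = sweedler (fun a b => eps_s a * S b) y.
Proof.
rewrite antipode_sweedler3 -coassoc_sweedler; last by trilinear.
by apply: eq_sweedler => a b; rewrite -sweedler_Smul mulr_sweedlerl.
Qed.

Lemma antipodeM_sweedler h g :
  S (h * g) = sweedler (fun p1 p2 =>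
                sweedler (fun q1 q2 => eps_s (p1 * q1) * S q2 * S p2) g) h.
Proof.
rewrite antipode_mul_eps_t comul_mul_sweedler; last by bilinear.
pose T u v w := sweedler (fun q1 q2 => S (u * q1) * (v * eps_t q2 * S w)) g.
have TT : trilin T by rewrite /T; trilinear.
transitivity (sweedler (fun a b => sweedler (fun c d => T a c d) b) h).
  apply: eq_sweedler => p1 p2; rewrite /T exchange_sweedler.
  by apply: eq_sweedler => q1 q2; rewrite -eps_tM mulr_sweedlerr.
rewrite -coassoc_sweedler //; apply: eq_sweedler => p1 p2; rewrite /T.
transitivity (sweedler (fun r1 r2 => sweedler (fun q1 q2 => sweedler (fun s1 s2 =>
    S (r1 * s1) * (r2 * (s2 * S q2) * S p2)) q1) g) p1).
  apply: eq_sweedler => r1 r2.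
  transitivity (sweedler (fun q1 q2 => sweedler (fun s1 s2 =>
      S (r1 * q1) * (r2 * (s1 * S s2) * S p2)) q2) g).
    apply: eq_sweedler => q1 q2.
    by rewrite -sweedler_mulS mulr_sweedlerr mulr_sweedlerl mulr_sweedlerr.
  by rewrite -coassoc_sweedler //; trilinear.
rewrite exchange_sweedler; apply: eq_sweedler => q1 q2.
rewrite -sweedler_Smul comul_mul_sweedler; last by bilinear.
rewrite !mulr_sweedlerl; apply: eq_sweedler => r1 r2.
by rewrite !mulr_sweedlerl; apply: eq_sweedler => s1 s2; rewrite !mulrA.
Qed.

Lemma antipode_rev_sweedler h g :
  S g * S h = sweedler (fun p1 p2 =>
                sweedler (fun q1 q2 => eps_s (p1 * q1) * S q2 * S p2) g) h.
Proof.
rewrite (antipode_mul_eps_t g) (antipode_eps_s_mul h) mulr_sweedlerl.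
transitivity (sweedler (fun q1 q2 => sweedler (fun p1 p2 =>
    S q1 * eps_t q2 * (eps_s p1 * S p2)) h) g).
  by apply: eq_sweedler => q1 q2; rewrite mulr_sweedlerr.
rewrite exchange_sweedler; apply: eq_sweedler => p1 p2.
transitivity (sweedler (fun q1 q2 => S q1 * eps_s p1 * eps_t q2 * S p2) g).
  apply: eq_sweedler => q1 q2.
  by rewrite mulrA -(mulrA (S q1)) -eps_s_eps_t_comm !mulrA.
transitivity (sweedler (fun q1 q2 =>
    sweedler (fun a b => S a * eps_s p1 * b * S q2 * S p2) q1) g).
  rewrite coassoc_sweedler; last by trilinear.
  apply: eq_sweedler => q1 q2; rewrite -sweedler_mulS mulr_sweedlerr mulr_sweedlerl.
  by apply: eq_sweedler => a b; rewrite !mulrA.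
by apply: eq_sweedler => q1 q2; rewrite -eps_sM !mulr_sweedlerl.
Qed.

Lemma antipodeM h g : S (h * g) = S g * S h.
Proof. by rewrite antipodeM_sweedler antipode_rev_sweedler. Qed.

Lemma comul_eps_sE V (G : H -> H -> V) y : bilin G ->
  sweedler G (eps_s y) = sweedler (fun a b => G a (eps_s y * b)) 1.
Proof.
move=> BG; have [_ BG2] := BG.
pose T u v w := eps (y * w) *: G u v.
have TT : trilin T by rewrite /T; trilinear.
transitivity (sweedler (fun a b => sweedler (fun c d => T c d b) a) 1).
  rewrite /eps_s (linmap_sweedlerE _ _ (linmap_sweedler BG)).
  apply: eq_sweedler => a b.
  by rewrite (linmapZ (linmap_sweedler BG)) /T scaler_sweedler.
rewrite -comul1_sweedlerl // exchange_sweedler; apply: eq_sweedler => c d.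
rewrite /eps_s mulr_sweedlerl (linmap_sweedlerE _ _ (BG2 c)).
by apply: eq_sweedler => a b; rewrite /T -scalerAl (linmapZ (BG2 c)).
Qed.

Lemma comul_eps_tE V (G : H -> H -> V) y : bilin G ->
  sweedler G (eps_t y) = sweedler (fun a b => G (a * eps_t y) b) 1.
Proof.
move=> BG; have [BG1 _] := BG.
pose T u v w := eps (u * y) *: G v w.
have TT : trilin T by rewrite /T; trilinear.
transitivity (sweedler (fun a b => sweedler (fun c d => T a c d) b) 1).
  rewrite /eps_t (linmap_sweedlerE _ _ (linmap_sweedler BG)).
  apply: eq_sweedler => a b.
  by rewrite (linmapZ (linmap_sweedler BG)) /T scaler_sweedler.
rewrite -coassoc_sweedler // -comul1_sweedlerl //; apply: eq_sweedler => a b.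
rewrite /eps_t mulr_sweedlerr (linmap_sweedlerE _ _ (BG1 b)).
by apply: eq_sweedler => c d; rewrite /T -scalerAr (linmapZ (BG1 b)).
Qed.

Lemma comul_eps_tE_left V (G : H -> H -> V) y : bilin G ->
  sweedler G (eps_t y) = sweedler (fun a b => G (eps_t y * a) b) 1.
Proof.
move=> BG; rewrite comul_eps_tE //.
transitivity (sweedler (fun a b => G (eps_s a * eps_t y) b) 1).
  rewrite (comul_eps_s (F := fun u v => G (u * eps_t y) v)); last by bilinear.
  by apply: eq_sweedler => a b; rewrite mul1r.
transitivity (sweedler (fun a b => G (eps_t y * eps_s a) b) 1).
  by apply: eq_sweedler => a b; rewrite eps_s_eps_t_comm.
rewrite (comul_eps_s (F := fun u v => G (eps_t y * u) v)); last by bilinear.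
by apply: eq_sweedler => a b; rewrite mul1r.
Qed.

Lemma eps_s1 : eps_s 1 = 1.
Proof.
rewrite -[RHS](counitr_sweedler (g := id)) //.
by apply: eq_sweedler => a b; rewrite mul1r.
Qed.

Lemma eps_t1 : eps_t 1 = 1.
Proof.
rewrite -[RHS](counitl_sweedler (g := id)) //.
by apply: eq_sweedler => a b; rewrite mulr1.
Qed.

Lemma antipode_eps_t y : S (eps_t y) = eps_s (eps_t y).
Proof.
rewrite -sweedler_Smul comul_eps_tE; last by bilinear.
transitivity (S (eps_t y) * eps_s 1); first by rewrite eps_s1 mulr1.
rewrite -sweedler_Smul mulr_sweedlerr.
by apply: eq_sweedler => a b; rewrite antipodeM mulrA.
Qed.

Lemma antipode_eps_s x : S (eps_s x) = eps_t (eps_s x).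
Proof.
rewrite -sweedler_mulS comul_eps_sE; last by bilinear.
transitivity (eps_t 1 * S (eps_s x)); first by rewrite eps_t1 mul1r.
rewrite -sweedler_mulS mulr_sweedlerl.
by apply: eq_sweedler => a b; rewrite antipodeM mulrA.
Qed.

Lemma comul1_eps_s_eps_t V (G : H -> H -> V) : bilin G ->
  sweedler (fun a b => G (eps_s b) (eps_t a)) 1 = sweedler G 1.
Proof.
move=> BG; have [BG1 BG2] := BG.
transitivity (sweedler (fun q1 q2 =>
    sweedler (fun p1 p2 => eps (p1 * q2) *: G q1 p2) 1) 1).
  transitivity (sweedler (fun r1 r2 => sweedler (fun q1 q2 => sweedler (fun p1 p2 =>
      (eps (p1 * r1) * eps (r2 * q2)) *: G q1 p2) 1) 1) 1).
    apply: eq_sweedler => r1 r2; rewrite {1}/eps_s (linmap_sweedlerE _ _ (BG1 _)).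
    apply: eq_sweedler => q1 q2; rewrite (linmapZ (BG1 _)) /eps_t.
    rewrite (linmap_sweedlerE _ _ (BG2 _)) scaler_sweedler.
    by apply: eq_sweedler => p1 p2; rewrite (linmapZ (BG2 _)) scalerA mulrC.
  rewrite exchange_sweedler; apply: eq_sweedler => q1 q2.
  rewrite exchange_sweedler; apply: eq_sweedler => p1 p2.
  rewrite /sweedler -scaler_suml; congr (_ *: _).
  by have := counit_weak1 W p1 1 q2; rewrite mulr1.
transitivity (sweedler (fun a b => G (a * 1) b) 1).
  rewrite -(comul_eps_t (F := G) 1) //; apply: eq_sweedler => a b.
  rewrite /eps_t (linmap_sweedlerE _ _ (BG2 _)).
  by apply: eq_sweedler => c d; rewrite (linmapZ (BG2 _)).
by apply: eq_sweedler => a b; rewrite mulr1.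
Qed.

Lemma comul1_antipode V (G : H -> H -> V) : bilin G ->
  sweedler (fun a b => G (S b) (S a)) 1 = sweedler G 1.
Proof.
move=> BG; have [BG1 BG2] := BG.
rewrite -[RHS]comul1_eps_s_eps_t //.
transitivity (sweedler (fun a b => G (S (eps_t b)) (S a)) 1).
  rewrite (comul_eps_t (F := fun u v => G (S v) (S u))); last by bilinear.
  by apply: eq_sweedler => a b; rewrite mulr1.
transitivity (sweedler (fun a b => G (eps_s b) (S (eps_s a))) 1).
  transitivity (sweedler (fun a b =>
      sweedler (fun r1 r2 => eps (r1 * b) *: G (eps_s r2) (S a)) 1) 1).
    apply: eq_sweedler => a b; rewrite antipode_eps_t {1}/eps_t.
    rewrite (linmap_sweedlerE _ _ eps_s_linmap).
    rewrite (linmap_sweedlerE _ _ (BG1 _)); apply: eq_sweedler => r1 r2.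
    by rewrite (linmapZ eps_s_linmap) (linmapZ (BG1 _)).
  rewrite exchange_sweedler; apply: eq_sweedler => r1 r2.
  rewrite {2}/eps_s (linmap_sweedlerE _ _ S_linmap) (linmap_sweedlerE _ _ (BG2 _)).
  by apply: eq_sweedler => a b; rewrite (linmapZ S_linmap) (linmapZ (BG2 _)).
transitivity (sweedler (fun a b => G (eps_s (1 * b)) (eps_t a)) 1).
  rewrite -(comul_eps_s (F := fun u v => G (eps_s v) (eps_t u)) 1); last by bilinear.
  by apply: eq_sweedler => a b; rewrite antipode_eps_s.
by apply: eq_sweedler => a b; rewrite mul1r.
Qed.

Lemma comul_eps_s_sweedler V (G : H -> H -> V) u : bilin G ->
  sweedler G (eps_s u)
  = sweedler (fun a b => sweedler (fun e k =>
      sweedler (fun f d => G (S e * f) (S a * d)) k) b) u.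
Proof.
move=> BG; have [BG1 BG2] := BG.
rewrite comul_eps_sE //.
transitivity (sweedler (fun a b =>
    sweedler (fun q1 q2 => G q1 (S a * (b * q2))) 1) u).
  rewrite exchange_sweedler; apply: eq_sweedler => q1 q2.
  rewrite -sweedler_Smul mulr_sweedlerl (linmap_sweedlerE _ _ (BG2 _)).
  by apply: eq_sweedler => a b; rewrite mulrA.
apply: eq_sweedler => a b.
rewrite -(comul_eps_s (F := fun x y => G x (S a * y))); last by bilinear.
rewrite -coassoc_sweedler; last by trilinear.
apply: eq_sweedler => c d; rewrite -sweedler_Smul.
by rewrite (linmap_sweedlerE _ _ (BG1 _)).
Qed.

Lemma comul_antipode V (F : H -> H -> V) h : bilin F ->
  sweedler F (S h) = sweedler (fun a b => F (S b) (S a)) h.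
Proof.
move=> BF; have [BF1 BF2] := BF.
pose Phi a e k w := sweedler (fun f d =>
  sweedler (fun z1 z2 => F (S e * f * z1) (S a * d * z2)) (S w)) k.
transitivity (sweedler (fun u w =>
    sweedler (fun a b => sweedler (fun e k => Phi a e k w) b) u) h).
  rewrite antipode_eps_s_mul (linmap_sweedlerE _ _ (linmap_sweedler BF)).
  apply: eq_sweedler => u w; rewrite comul_mul_sweedler; last by bilinear.
  by rewrite comul_eps_s_sweedler //; bilinear.
rewrite coassoc_sweedler; last by rewrite /Phi; trilinear.
transitivity (sweedler (fun a n => sweedler (fun e m =>
    sweedler (fun q1 q2 => F (S e * (eps_t m * q1)) (S a * q2)) 1) n) h).
  apply: eq_sweedler => a n.
  rewrite coassoc_sweedler; last by rewrite /Phi; trilinear.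
  apply: eq_sweedler => e m.
  pose F' x y := F (S e * x) (S a * y).
  have BF' : bilin F' by rewrite /F'; bilinear.
  transitivity (sweedler F' (eps_t m)); last by rewrite comul_eps_tE_left.
  rewrite -sweedler_mulS (linmap_sweedlerE _ _ (linmap_sweedler BF')).
  apply: eq_sweedler => k w; rewrite /Phi comul_mul_sweedler //.
  by apply: eq_sweedler => f d; apply: eq_sweedler => z1 z2; rewrite /F' !mulrA.
transitivity (sweedler (fun a n =>
    sweedler (fun q1 q2 => F (S n * q1) (S a * q2)) 1) h).
  apply: eq_sweedler => a n; rewrite exchange_sweedler; apply: eq_sweedler => q1 q2.
  rewrite (antipode_mul_eps_t n) mulr_sweedlerl (linmap_sweedlerE _ _ (BF1 _)).
  by apply: eq_sweedler => e m; rewrite mulrA.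
transitivity (sweedler (fun a n =>
    sweedler (fun q1 q2 => F (S (q2 * n)) (S (q1 * a))) 1) h).
  apply: eq_sweedler => a n.
  rewrite -(comul1_antipode (G := fun x y => F (S n * x) (S a * y))); last by bilinear.
  by apply: eq_sweedler => q1 q2; rewrite !antipodeM.
by rewrite exchange_sweedler -[in RHS](mul1r h) comul_mul_sweedler //; bilinear.
Qed.

Section InverseAntipode.
Variable Sinv : H -> H.
Hypotheses (SK : cancel S Sinv) (KS : cancel Sinv S).

Lemma Sinv_linmap : linmap Sinv.
Proof.
move=> c x y; apply: (can_inj SK); rewrite KS.
by have := S_linmap c (Sinv x) (Sinv y); rewrite !KS => ->.
Qed.

Lemma SinvM a b : Sinv (a * b) = Sinv b * Sinv a.
Proof. by apply: (can_inj SK); rewrite antipodeM !KS. Qed.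

Lemma comul_Sinv V (F : H -> H -> V) y : bilin F ->
  sweedler F (Sinv y) = sweedler (fun a b => F (Sinv b) (Sinv a)) y.
Proof.
move=> [BF1 BF2]; rewrite -{2}[y]KS comul_antipode.
  by apply: eq_sweedler => a b; rewrite !SK.
by split=> ?; [exact: linmap_comp (BF2 _) Sinv_linmap
            | exact: linmap_comp (BF1 _) Sinv_linmap].
Qed.

Section PartialRepresentation.
Variables (A : algType K) (pi : H -> A).
Hypothesis Hrel : wpar_relations D S pi.
Local Notation E := (Eop D S pi).
Local Notation Et := (Etop D S pi).

Lemma pi_linmap : linmap pi.
Proof. by case: Hrel. Qed.

Lemma pi1 : pi 1 = 1.
Proof. by case: Hrel. Qed.

Lemma pi_mergel_E h k :
  sweedler (fun a b => pi h * pi a * pi (S b)) k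
  = sweedler (fun a b => pi (h * a) * pi (S b)) k.
Proof. by case: Hrel => _ _ R _ _; apply: R. Qed.

Lemma pi_mergel_Et h k :
  sweedler (fun a b => pi h * pi (S a) * pi b) k
  = sweedler (fun a b => pi (h * S a) * pi b) k.
Proof. by case: Hrel => _ _ _ R _; apply: R. Qed.

Lemma pi_merger_E h k :
  sweedler (fun a b => pi a * pi (S b) * pi k) h
  = sweedler (fun a b => pi a * pi (S b * k)) h.
Proof. by case: Hrel => _ _ _ _ [R _ _]; apply: R. Qed.

Lemma pi_merger_Et h k :
  sweedler (fun a b => pi (S a) * pi b * pi k) h
  = sweedler (fun a b => pi (S a) * pi (b * k)) h.
Proof. by case: Hrel => _ _ _ _ [_ R _]; apply: R. Qed.

Lemma pi_sweedler3 h :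
  pi h = sweedler (fun a b => sweedler (fun c d => pi a * pi (S c) * pi d) b) h.
Proof. by case: Hrel => _ _ _ _ [_ _ R]; apply: R. Qed.

Lemma EopE k : E k = sweedler (fun a b => pi a * pi (S b)) k.
Proof. by []. Qed.

Lemma EtopE k : Et k = sweedler (fun a b => pi (S a) * pi b) k.
Proof. by []. Qed.

Lemma linmap_Eop (f : H -> H) : linmap f -> linmap (fun x => E (f x)).
Proof.
have : bilin (fun a b => pi a * pi (S b)).
  by split=> ? /=; repeat first [linear_step | apply: (linmap_comp pi_linmap)].
exact: linmap_sweedler_comp.
Qed.

Lemma linmap_Etop (f : H -> H) : linmap f -> linmap (fun x => Et (f x)).
Proof.
have : bilin (fun a b => pi (S a) * pi b).
  by split=> ? /=; repeat first [linear_step | apply: (linmap_comp pi_linmap)].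
exact: linmap_sweedler_comp.
Qed.

Local Ltac linear_pi := repeat first
  [ linear_step
  | apply: linmap_Eop
  | apply: linmap_Etop
  | apply: (linmap_comp pi_linmap)
  | apply: (linmap_comp Sinv_linmap) ].
Local Ltac bilinear_pi := split=> ? /=; linear_pi.
Local Ltac trilinear_pi := split=> ? ? /=; linear_pi.

Lemma Eop1 : E 1 = 1.
Proof.
rewrite -pi1 [RHS]pi_sweedler3 -coassoc_sweedler; last by trilinear_pi.
transitivity (sweedler (fun a b => sweedler (fun c d => pi c * pi (S d * b)) a) 1).
  rewrite -comul1_sweedlerl; last by trilinear_pi.
  rewrite exchange_sweedler EopE; apply: eq_sweedler => c d.
  transitivity (pi c * pi (S d * eps_s 1)); first by rewrite eps_s1 mulr1.
  rewrite -sweedler_Smul mulr_sweedlerr (linmap_sweedlerE _ _ pi_linmap) mulr_sweedlerr.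
  by apply: eq_sweedler => a b; rewrite antipodeM !mulrA.
by apply: eq_sweedler => a b; rewrite -pi_merger_E.
Qed.

Lemma Etop1 : Et 1 = 1.
Proof.
rewrite -pi1 [RHS]pi_sweedler3.
transitivity (sweedler (fun a b => sweedler (fun c d => pi (a * S c) * pi d) b) 1).
  rewrite -coassoc_sweedler; last by trilinear_pi.
  rewrite -comul1_sweedlerl; last by trilinear_pi.
  rewrite EtopE; apply: eq_sweedler => a b.
  transitivity (pi (eps_t 1 * S a) * pi b); first by rewrite eps_t1 mul1r.
  rewrite -sweedler_mulS !mulr_sweedlerl (linmap_sweedlerE _ _ pi_linmap) mulr_sweedlerl.
  by apply: eq_sweedler => c d; rewrite antipodeM !mulrA.
by apply: eq_sweedler => a b; rewrite -pi_mergel_Et.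
Qed.

Lemma Eop_mul_pi h k :
  E k * pi h = sweedler (fun x y => pi y * E (Sinv x * k)) h.
Proof.
rewrite EopE mulr_sweedlerl pi_merger_E.
pose Psi u t := sweedler (fun c d => pi (t * c) * pi (S d * u)) k.
have LPsi u : linmap (Psi u) by rewrite /Psi; linear_pi.
transitivity (sweedler (fun x y =>
    sweedler (fun u v => Psi u (y * Sinv v)) x) h); last first.
  apply: eq_sweedler => x y; symmetry; rewrite EopE mulr_sweedlerr.
  under eq_sweedler => a b do rewrite mulrA.
  rewrite pi_mergel_E comul_mul_sweedler; last by bilinear_pi.
  rewrite comul_Sinv; last by bilinear_pi.
  apply: eq_sweedler => u v; apply: eq_sweedler => c d.
  by rewrite antipodeM KS !mulrA.
rewrite coassoc_sweedler; last by rewrite /Psi; trilinear_pi.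
transitivity (sweedler (fun u m => Psi u (Sinv (eps_t m))) h); last first.
  apply: eq_sweedler => u m; rewrite -sweedler_mulS (linmap_sweedlerE _ _ Sinv_linmap).
  rewrite (linmap_sweedlerE _ _ (LPsi u)); apply: eq_sweedler => v y.
  by rewrite SinvM SK.
rewrite (comul_eps_t (F := fun u t => Psi u (Sinv t))); last by rewrite /Psi; bilinear_pi.
rewrite -(comul1_antipode (G := fun x y => Psi (x * h) (Sinv y))); last first.
  by rewrite /Psi; bilinear_pi.
rewrite -[in LHS](mul1r k) comul_mul_sweedler; last by bilinear_pi.
apply: eq_sweedler => q1 q2; rewrite /Psi SK; apply: eq_sweedler => c d.
by rewrite antipodeM !mulrA.
Qed.

Lemma pi_mul_Etop h k :
  pi h * Et k = sweedler (fun x y => Et (k * Sinv y) * pi x) h.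
Proof.
rewrite EtopE mulr_sweedlerr.
transitivity (sweedler (fun a b => pi h * pi (S a) * pi b) k).
  by apply: eq_sweedler => a b; rewrite mulrA.
rewrite pi_mergel_Et.
pose Psi t v := sweedler (fun a b => pi (v * S a) * pi (b * t)) k.
have LPsi v : linmap (fun t => Psi t v) by rewrite /Psi; linear_pi.
transitivity (sweedler (fun x y =>
    sweedler (fun u v => Psi (Sinv u * x) v) y) h); last first.
  apply: eq_sweedler => x y; symmetry; rewrite EtopE mulr_sweedlerl.
  rewrite pi_merger_Et comul_mul_sweedler; last by bilinear_pi.
  transitivity (sweedler (fun a b => sweedler (fun u v =>
      pi (S (a * Sinv v)) * pi (b * Sinv u * x)) y) k).
    by apply: eq_sweedler => a b; rewrite comul_Sinv //; bilinear_pi.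
  rewrite exchange_sweedler; apply: eq_sweedler => u v; apply: eq_sweedler => a b.
  by rewrite antipodeM KS !mulrA.
rewrite -coassoc_sweedler; last by rewrite /Psi; trilinear_pi.
transitivity (sweedler (fun n v => Psi (Sinv (eps_s n)) v) h); last first.
  apply: eq_sweedler => n v; rewrite -sweedler_Smul (linmap_sweedlerE _ _ Sinv_linmap).
  rewrite (linmap_sweedlerE _ _ (LPsi v)).
  by apply: eq_sweedler => a b; rewrite SinvM SK.
rewrite (comul_eps_s (F := fun t v => Psi (Sinv t) v)); last by rewrite /Psi; bilinear_pi.
rewrite -(comul1_antipode (G := fun x y => Psi (Sinv x) (h * y))); last first.
  by rewrite /Psi; bilinear_pi.
rewrite -[in LHS](mulr1 k) comul_mul_sweedler; last by bilinear_pi.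
rewrite exchange_sweedler; apply: eq_sweedler => q1 q2; rewrite /Psi SK.
by apply: eq_sweedler => a b; rewrite antipodeM !mulrA.
Qed.

Lemma pi_Eop_sweedler g : pi g = sweedler (fun x y => pi y * E (Sinv x)) g.
Proof.
have := Eop_mul_pi g 1; rewrite Eop1 mul1r => ->.
by apply: eq_sweedler => x y; rewrite mulr1.
Qed.

Lemma pi_Etop_sweedler g : pi g = sweedler (fun x y => Et (Sinv y) * pi x) g.
Proof.
have := pi_mul_Etop g 1; rewrite Etop1 mulr1 => ->.
by apply: eq_sweedler => x y; rewrite mul1r.
Qed.

Lemma Eop_mul_pi_Etop h k :
  E k * pi h = sweedler (fun x y => Et (Sinv y) * E k * pi x) h.
Proof.
pose T u v w := Et (Sinv w) * pi v * E (Sinv u * k).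
have TT : trilin T by rewrite /T; trilinear_pi.
transitivity (sweedler (fun x y => sweedler (fun v w => T x v w) y) h).
  rewrite Eop_mul_pi; apply: eq_sweedler => x y.
  by rewrite [pi y]pi_Etop_sweedler mulr_sweedlerl.
rewrite -coassoc_sweedler //; apply: eq_sweedler => x y.
by rewrite -mulrA Eop_mul_pi mulr_sweedlerr; apply: eq_sweedler => u v; rewrite /T mulrA.
Qed.

Lemma pi_mul_Etop_Eop h k :
  pi h * Et k = sweedler (fun x y => pi y * Et k * E (Sinv x)) h.
Proof.
pose T u v w := Et (k * Sinv w) * pi v * E (Sinv u).
have TT : trilin T by rewrite /T; trilinear_pi.
transitivity (sweedler (fun x y => sweedler (fun u v => T u v y) x) h).
  rewrite pi_mul_Etop; apply: eq_sweedler => x y.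
  by rewrite [pi x]pi_Eop_sweedler mulr_sweedlerr; apply: eq_sweedler => u v; rewrite /T mulrA.
rewrite coassoc_sweedler //; apply: eq_sweedler => x y.
by rewrite pi_mul_Etop mulr_sweedlerl.
Qed.

End PartialRepresentation.
End InverseAntipode.

End WeakHopf.

Theorem proposition4p5 (K : fieldType) (H : algType K)
    (D : H -> seq (H * H)) (eps : H -> K) (S Sinv : H -> H) :
  is_weak_hopf D eps S ->
  cancel S Sinv -> cancel Sinv S ->
  forall (A : algType K) (pi : H -> A), is_Hparw D S pi ->
  forall h k : H,
  [/\ (* (a) E_k[h] = [h_2] E_{S^-1(h_1) k} *)
      Eop D S pi k * pi h
        = \sum_(p <- D h) pi p.2 * Eop D S pi (Sinv p.1 * k),
      (* (b) [h] ~E_k = ~E_{k S^-1(h_2)} [h_1] *)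
      pi h * Etop D S pi k
        = \sum_(p <- D h) Etop D S pi (k * Sinv p.2) * pi p.1,
      (* (c) E_k[h] = ~E_{S^-1(h_2)} E_k [h_1] *)
      Eop D S pi k * pi h
        = \sum_(p <- D h) Etop D S pi (Sinv p.2) * Eop D S pi k * pi p.1 &
      (* (d) [h] ~E_k = [h_2] ~E_k E_{S^-1(h_1)} *)
      pi h * Etop D S pi k
        = \sum_(p <- D h) pi p.2 * Etop D S pi k * Eop D S pi (Sinv p.1)].
Proof.
move=> W SK KS A pi [Hrel _] h k; split.
- exact: (Eop_mul_pi W SK KS Hrel).
- exact: (pi_mul_Etop W SK KS Hrel).
- exact: (Eop_mul_pi_Etop W SK KS Hrel).
- exact: (pi_mul_Etop_Eop W SK KS Hrel).
Qed.
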